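(* Let $A\ge 3$, $N\ge 2$, and let $w:\mathbf{Prof}\to\mathbf{Pref}$ be a social welfare function satisfying IIA with pairwise comparison functions $s_1,\dots,s_A:\{0,e,1\}^N\to\{0,e,1\}$, and satisfying Unanimity. If $w$ satisfies Unrestricted Domain, then for every $j\in\{1,\dots,A\}$ and every $r\in\{0,1\}^N$ we have $s_j(r)\in\{0,1\}$.
   Context: Let $\mathcal{A}=\{a_1,\dots,a_A\}$ and $N\ge 2$ individuals; $e$ is a third symbol distinct from $0,1$. Let $\sigma(i)=i+1$ for $i<A$, $\sigma(A)=1$. A preference relation is $t\in\{0,e,1\}^A$, where $t_i$ records $a_i$ versus $a_{\sigma(i)}$: $0$ means $a_i\prec a_{\sigma(i)}$, $1$ means $a_{\sigma(i)}\prec a_i$, $e$ means $a_i\sim a_{\sigma(i)}$. It corresponds to a weak order if some complete transitive relation on $\mathcal{A}$ realizes all these comparisons; otherwise it is a preference cycle. $\mathbf{Pref}=\{0,e,1\}^A$. A profile is an $A\times N$ matrix over $\{0,e,1\}$ whose every column corresponds to a weak order; $\mathbf{Prof}$ is the set of profiles, written in row form $(r_1,\dots,r_A)$ with $r_j\in\{0,e,1\}^N$ (row $j$ lists all individuals' comparisons of $a_j$ versus $a_{\sigma(j)}$). A social welfare function is a map $w:\mathbf{Prof}\to\mathbf{Pref}$. It satisfies IIA if there are functions $s_1,\dots,s_A:\{0,e,1\}^N\to\{0,e,1\}$ (pairwise comparison functions) with $w(r_1,\dots,r_A)=(s_1(r_1),\dots,s_A(r_A))$ for every profile. It satisfies Unanimity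 if $s_j(\Delta x)=x$ for all $j$ and $x\in\{0,1\}$, where $\Delta x=(x,\dots,x)\in\{0,e,1\}^N$. It satisfies Unrestricted Domain if $w(m)$ corresponds to a weak order for every profile $m$. *)

From mathcomp Require Import all_boot.
Set Implicit Arguments. Unset Strict Implicit. Unset Printing Implicit Defensive.

Inductive sym := s0 | se | s1.

(* sigma : a_i |-> a_{i+1}, a_A |-> a_1 (0-indexed: i |-> i+1 mod A). *)
Definition sigma (A : nat) (i : 'I_A) : 'I_A :=
  match A as n return 'I_n -> 'I_n with
  | 0 => fun i => i
  | n.+1 => fun i => ordS i
  end i.

(* A preference relation: t : 'I_A -> sym, t i compares a_i with a_(sigma i). *)
Definition pref (A : nat) := 'I_A -> sym.

(* R x y reads "x is weakly below y" (x ≼ y). *)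
Definition realizes (A : nat) (R : 'I_A -> 'I_A -> Prop) (t : pref A) : Prop :=
  forall i : 'I_A,
    match t i with
    | s0 => R i (sigma i) /\ ~ R (sigma i) i
    | s1 => R (sigma i) i /\ ~ R i (sigma i)
    | se => R i (sigma i) /\ R (sigma i) i
    end.

Definition is_weak_order (A : nat) (t : pref A) : Prop :=
  exists R : 'I_A -> 'I_A -> Prop,
    (forall x y, R x y \/ R y x) /\
    (forall x y z, R x y -> R y z -> R x z) /\
    realizes R t.

(* Profiles in row form: m j k = individual k's comparison of a_j vs a_(sigma j). *)
Definition profile (A N : nat) := 'I_A -> 'I_N -> sym.

Definition is_profile (A N : nat) (m : profile A N) : Prop :=
  forall k : 'I_N, is_weak_order (fun j => m j k).

Definition IIA (A N : nat) (w : profile A N -> pref A)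
    (s : 'I_A -> ('I_N -> sym) -> sym) : Prop :=
  forall m, is_profile m -> forall j, w m j = s j (m j).

Definition Unanimity (A N : nat) (s : 'I_A -> ('I_N -> sym) -> sym) : Prop :=
  forall j, s j (fun _ => s0) = s0 /\ s j (fun _ => s1) = s1.

Definition UnrestrictedDomain (A N : nat) (w : profile A N -> pref A) : Prop :=
  forall m, is_profile m -> is_weak_order (w m).

Definition binary (x : sym) : Prop := x = s0 \/ x = s1.

From mathcomp Require Import all_boot zify.
Set Implicit Arguments. Unset Strict Implicit. Unset Printing Implicit Defensive.

(* Suppose s_j(r) = e for a binary r.  Consider the profile whose row j is r,
   whose row sigma(j) is r with 0 and 1 exchanged, and whose other rows are the
   constant x in {0, 1}: every column is a weak order.  By IIA and Unanimity
   the social preference is e at j, s_(sigma j)(flipped r) at sigma(j) and x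
   elsewhere (and there is an elsewhere since A >= 3).  Going once around the
   cycle a_1, ..., a_A, the comparisons of a weak order cannot all be weak
   in one direction with at least one of them strict; hence the entry at
   sigma(j) must be the strict comparison opposite to x.  Taking x = 0 and
   x = 1 makes s_(sigma j)(flipped r) equal to both 1 and 0. *)

Section Sigma.
Variable A : nat.
Implicit Types i j : 'I_A.

Lemma sigma_val i : sigma i = i.+1 %% A :> nat.
Proof. by case: A i => [[]|n] i. Qed.

Lemma sigma_cases i :
  (i.+1 < A /\ sigma i = i.+1 :> nat) \/ (i.+1 = A /\ sigma i = 0 :> nat).
Proof.
rewrite sigma_val; have := ltn_ord i; rewrite leq_eqVlt => /orP[/eqP->|lt_iA].
  by right; rewrite modnn.
by left; rewrite modn_small.
Qed.

Lemma iter_sigma_val k i : iter k (@sigma A) i = (i + k) %% A :> nat.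
Proof.
elim: k => [|k IHk] /=; first by rewrite addn0 modn_small.
by rewrite sigma_val IHk -addn1 modnDml addn1 addnS.
Qed.

Lemma iter_sigma_pred i : iter A.-1 (@sigma A) (sigma i) = i.
Proof.
have A_gt0 : 0 < A := leq_ltn_trans (leq0n i) (ltn_ord i).
apply: val_inj => /=; rewrite iter_sigma_val sigma_val modnDml addSn -addnS prednK //.
by rewrite modnDr modn_small.
Qed.

Lemma sigma_inj : injective (@sigma A).
Proof.
move=> i i' eq_sigma.
by rewrite -(iter_sigma_pred i) -(iter_sigma_pred i') eq_sigma.
Qed.

Lemma sigma_neq (hA : 1 < A) i : sigma i != i.
Proof. by apply/eqP => /(congr1 val) /=; case: (sigma_cases i) => -[]; lia. Qed.

Lemma sigma2_neq (hA : 2 < A) i : sigma (sigma i) != i.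
Proof.
apply/eqP => /(congr1 val) /=.
by case: (sigma_cases (sigma i)) => -[? ->]; case: (sigma_cases i) => -[]; lia.
Qed.

Lemma preorder_sigma_sym (R : 'I_A -> 'I_A -> Prop) :
  (forall x, R x x) -> (forall x y z, R x y -> R y z -> R x z) ->
  (forall i, R i (sigma i)) -> forall i, R (sigma i) i.
Proof.
move=> R_refl R_trans R_sigma i.
have R_iter k x : R x (iter k (@sigma A) x).
  by elim: k => [|k IHk] //=; apply: R_trans IHk (R_sigma _).
by have := R_iter A.-1 (sigma i); rewrite iter_sigma_pred.
Qed.

Definition sigma_dist j i : nat := if j <= i then i - j else i + A - j.

Lemma sigma_dist_lt j i : sigma_dist j i < A.
Proof.
by rewrite /sigma_dist; case: (leqP j i); have := ltn_ord i; have := ltn_ord j; lia.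
Qed.

Lemma sigma_dist_sigma j i : sigma i != j -> sigma_dist j (sigma i) = (sigma_dist j i).+1.
Proof.
rewrite -val_eqE /sigma_dist /=.
by case: (sigma_cases i) => -[? ->]; do 2!case: ifP; have := ltn_ord j; lia.
Qed.

Lemma sigma_dist_gt1 j i : i != j -> i != sigma j -> 1 < sigma_dist j i.
Proof.
rewrite -!val_eqE /sigma_dist /=.
by case: (sigma_cases j) => -[? ->]; case: ifP; have := ltn_ord i; lia.
Qed.

End Sigma.

Definition flip (x : sym) : sym := match x with s0 => s1 | se => se | s1 => s0 end.

Lemma flipK : involutive flip. Proof. by case. Qed.

Section WeakOrder.
Variable A : nat.
Implicit Types (t : pref A) (h : 'I_A -> nat).

Lemma eq_is_weak_order t t' : t =1 t' -> is_weak_order t -> is_weak_order t'.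
Proof.
move=> eq_t [R [R_total [R_trans R_t]]]; exists R; do 2!split=> //.
by move=> i; rewrite -eq_t; apply: R_t.
Qed.

Lemma is_weak_order_flip t : is_weak_order t -> is_weak_order (flip \o t).
Proof.
move=> [R [R_total [R_trans R_t]]]; exists (fun x y => R y x).
split; [by move=> x y; case: (R_total x y); auto | split; last move=> i /=].
  by move=> x y z Ryx Rzy; apply: R_trans Rzy Ryx.
by have := R_t i; case: (t i) => -[].
Qed.

Lemma weak_order_no_s1_no_s0 t :
  is_weak_order t -> (forall i, t i <> s1) -> forall i, t i <> s0.
Proof.
move=> [R [R_total [R_trans R_t]]] t_neq1 i t_i.
have R_refl x : R x x by case: (R_total x x).
have R_sigma i' : R i' (sigma i').
  by have := R_t i'; have := t_neq1 i'; case: (t i') => // _ [].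
have := preorder_sigma_sym R_refl R_trans R_sigma i.
by have := R_t i; rewrite t_i => -[].
Qed.

Definition rank_pref h : pref A := fun i =>
  if h i < h (sigma i) then s0 else if h (sigma i) < h i then s1 else se.

Lemma rank_pref_weak_order h : is_weak_order (rank_pref h).
Proof.
exists (fun x y => h x <= h y); split; [|split].
- by move=> x y; apply/orP/leq_total.
- by move=> x y z; apply: leq_trans.
- by move=> i; rewrite /rank_pref; case: ltngtP => cmp_h; lia.
Qed.

End WeakOrder.

Section PairPref.
Variables (A : nat) (j : 'I_A).

Definition pair_pref (b c x : sym) : pref A :=
  fun i => if i == j then b else if i == sigma j then c else x.

Lemma flip_pair_pref b c x :
  flip \o pair_pref b c x =1 pair_pref (flip b) (flip c) (flip x).
Proof. by move=> i; rewrite /= /pair_pref; case: (i == j); case: (i == sigma j). Qed.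

Hypothesis hA : 1 < A.

Lemma pair_pref0_weak_order b : binary b -> is_weak_order (pair_pref b (flip b) s0).
Proof.
move=> b_bin.
(* Along the cycle from sigma (sigma j) to j every step is strict and climbs by
   one; a_j sits just above, and a_(sigma j) on top or at the bottom according to b. *)
pose h y := if y == sigma j then (if b is s0 then A.+1 else 1)
            else if y == j then A else sigma_dist j y.
have h_sigma_j : h (sigma j) = if b is s0 then A.+1 else 1 by rewrite /h eqxx.
have h_mid y : y != sigma j -> 1 < h y <= A.
  move=> y_neq; rewrite /h (negbTE y_neq); case: eqP => [_|/eqP y_neq_j].
    by rewrite hA leqnn.
  by have := sigma_dist_lt j y; have := sigma_dist_gt1 y_neq_j y_neq; lia.
have h_step i : i != j -> i != sigma j -> h i < h (sigma i).
  move=> i_neq_j i_neq_sj.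
  rewrite /h (negbTE i_neq_sj) (negbTE i_neq_j) (inj_eq (@sigma_inj A)) (negbTE i_neq_j).
  have := sigma_dist_lt j i; case: eqP => [//|/eqP si_neq_j].
  by rewrite sigma_dist_sigma.
have j_neq_sj : j != sigma j by rewrite eq_sym sigma_neq.
have ssj_neq_sj : sigma (sigma j) != sigma j by rewrite sigma_neq.
apply: (eq_is_weak_order _ (rank_pref_weak_order h)) => i.
rewrite /pair_pref /rank_pref.
case: eqP => [->|/eqP i_neq_j].
  have /andP[h_lo h_hi] := h_mid j j_neq_sj.
  by rewrite h_sigma_j; case: b_bin => ->; case: ltngtP => //; lia.
case: eqP => [->|/eqP i_neq_sj].
  have /andP[h_lo h_hi] := h_mid _ ssj_neq_sj.
  by rewrite h_sigma_j; case: b_bin => ->; case: ltngtP => //; lia.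
by have := h_step i i_neq_j i_neq_sj; case: ltngtP.
Qed.

Lemma pair_pref_weak_order b x :
  binary b -> binary x -> is_weak_order (pair_pref b (flip b) x).
Proof.
move=> b_bin [->|->]; first exact: pair_pref0_weak_order.
have flip_b_bin : binary (flip b) by case: b_bin => ->; [right | left].
apply: eq_is_weak_order _ (is_weak_order_flip (pair_pref0_weak_order flip_b_bin)) => i.
by rewrite flip_pair_pref /= flipK.
Qed.

End PairPref.

Section PairPrefIndifferent.
Variables (A : nat) (hA : 2 < A) (j : 'I_A).

Lemma pair_pref_se_s0 v : is_weak_order (pair_pref j se v s0) -> v = s1.
Proof.
have ssj_neq_j : sigma (sigma j) != j by rewrite sigma2_neq.
have ssj_neq_sj : sigma (sigma j) != sigma j by rewrite sigma_neq // ltnW.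
have t_ssj : pair_pref j se v s0 (sigma (sigma j)) = s0.
  by rewrite /pair_pref (negbTE ssj_neq_j) (negbTE ssj_neq_sj).
case: v t_ssj => // t_ssj t_wo; exfalso; apply: (weak_order_no_s1_no_s0 t_wo _ t_ssj).
all: by move=> i; rewrite /pair_pref; case: (i == j); case: (i == sigma j).
Qed.

Lemma pair_pref_se_s1 v : is_weak_order (pair_pref j se v s1) -> v = s0.
Proof.
move=> /is_weak_order_flip /(eq_is_weak_order (flip_pair_pref j se v s1)).
by move/pair_pref_se_s0; case: v.
Qed.

End PairPrefIndifferent.

Theorem mainTheorem5 (A N : nat) (hA : 3 <= A) (hN : 2 <= N)
    (w : profile A N -> pref A) (s : 'I_A -> ('I_N -> sym) -> sym) :
  IIA w s -> Unanimity s -> UnrestrictedDomain w ->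
  forall (j : 'I_A) (r : 'I_N -> sym), (forall k, binary (r k)) -> binary (s j r).
Proof.
move=> iia unanimity domain j r r_bin.
case s_jr: (s j r); [by left | exfalso | by right].
pose c k := flip (r k).
pose m x : profile A N :=
  fun i => if i == j then r else if i == sigma j then c else fun=> x.
have m_profile x : binary x -> is_profile (m x).
  move=> x_bin k.
  apply: eq_is_weak_order _ (pair_pref_weak_order j (ltnW hA) (r_bin k) x_bin) => i.
  by rewrite /m /pair_pref; case: (i == j); case: (i == sigma j).
have w_m_weak_order x :
    binary x -> is_weak_order (pair_pref j se (s (sigma j) c) x).
  move=> x_bin; apply: eq_is_weak_order _ (domain _ (m_profile x x_bin)) => i.
  rewrite (iia _ (m_profile x x_bin)) /m /pair_pref.
  case: eqP => [->|_]; first by rewrite s_jr.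
  case: eqP => [->|_] //.
  by case: x_bin => ->; case: (unanimity i).
have := pair_pref_se_s1 hA (w_m_weak_order s1 (or_intror erefl)).
by rewrite (pair_pref_se_s0 hA (w_m_weak_order s0 (or_introl erefl))).
Qed.
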